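(* Let $S=K[x_1,\dots,x_n]$ be a standard graded polynomial ring over a field $K$, and let $I\subset S$ be a graded ideal generated in a single degree, with minimal homogeneous generating set $f_1,\dots,f_m$. Assume $I$ has linear relations, i.e. the module of relations $\{(r_1,\dots,r_m)\in S^m:\sum_i r_if_i=0\}$ is generated by relations $(\ell_1,\dots,\ell_m)$ whose entries are linear forms. Then for every $1\le i\le m$, the colon ideal $(f_1,\dots,f_{i-1},f_{i+1},\dots,f_m):f_i$ is generated by linear forms. *)

From HB Require Import structures.
From mathcomp Require Import all_boot all_order all_algebra.
From mathcomp Require Import mpoly.
Set Implicit Arguments. Unset Strict Implicit. Unset Printing Implicit Defensive.
Import GRing.Theory.
Local Open Scope ring_scope.

(* p is homogeneous of (standard) degree d (the zero polynomial counts). *)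
Definition homog_deg {K : fieldType} {n : nat} (d : nat) (p : {mpoly K[n]}) : Prop :=
  p \is @ishomog1 n K d (@mdeg n).

Definition linear_form {K : fieldType} {n : nat} (p : {mpoly K[n]}) : Prop :=
  homog_deg 1 p.

Definition in_ideal {K : fieldType} {n k : nat}
  (g : 'I_k -> {mpoly K[n]}) (p : {mpoly K[n]}) : Prop :=
  exists r : 'I_k -> {mpoly K[n]}, p = \sum_(j < k) r j * g j.

Definition in_ideal_but {K : fieldType} {n m : nat}
  (f : 'I_m -> {mpoly K[n]}) (i : 'I_m) (p : {mpoly K[n]}) : Prop :=
  exists r : 'I_m -> {mpoly K[n]}, r i = 0 /\ p = \sum_(j < m) r j * f j.

Definition minimal_gens {K : fieldType} {n m : nat}
  (f : 'I_m -> {mpoly K[n]}) : Prop :=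
  forall i : 'I_m, ~ in_ideal_but f i (f i).

Definition is_relation {K : fieldType} {n m : nat}
  (f : 'I_m -> {mpoly K[n]}) (r : 'I_m -> {mpoly K[n]}) : Prop :=
  \sum_(j < m) r j * f j = 0.

Definition has_linear_relations {K : fieldType} {n m : nat}
  (f : 'I_m -> {mpoly K[n]}) : Prop :=
  exists (k : nat) (L : 'I_k -> 'I_m -> {mpoly K[n]}),
    (forall t, is_relation f (L t)) /\
    (forall t j, linear_form (L t j)) /\
    (forall r, is_relation f r ->
       exists c : 'I_k -> {mpoly K[n]},
         forall j, r j = \sum_(t < k) c t * L t j).

Definition in_colon {K : fieldType} {n m : nat}
  (f : 'I_m -> {mpoly K[n]}) (i : 'I_m) (g : {mpoly K[n]}) : Prop :=
  in_ideal_but f i (g * f i).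

Definition gen_by_linear_forms {K : fieldType} {n : nat}
  (J : {mpoly K[n]} -> Prop) : Prop :=
  exists (k : nat) (h : 'I_k -> {mpoly K[n]}),
    (forall t, linear_form (h t)) /\
    (forall g, J g <-> in_ideal h g).

From HB Require Import structures.
From mathcomp Require Import all_boot all_order all_algebra.
From mathcomp Require Import mpoly.
Local Open Scope ring_scope.
Import GRing.Theory.

(* The colon ideal
   (f_j, j <> i) : f_i is exactly the set of i-th components of the
   relations of f: g f_i = sum_(j<>i) r_j f_j holds iff the vector with
   i-th entry g and j-th entries -r_j is a relation.  If the relation module
   is generated by relations L_1,..,L_k, the i-th components of relations
   form the ideal generated by the i-th entries L_1 i,..,L_k i (relations
   are closed under S-linear combinations).  Hence when the L_t have linear
   entries, the colon ideal is generated by the linear forms L_t i. *)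

Section ColonIdeal.

Variables (K : fieldType) (n m : nat) (f : 'I_m -> {mpoly K[n]}).

Lemma relation_lincomb (k : nat) (L : 'I_k -> 'I_m -> {mpoly K[n]})
    (c : 'I_k -> {mpoly K[n]}) :
  (forall t, is_relation f (L t)) ->
  is_relation f (fun j => \sum_(t < k) c t * L t j).
Proof.
move=> relL; rewrite /is_relation.
under eq_bigr do rewrite mulr_suml.
rewrite exchange_big /= big1 // => t _.
transitivity (c t * \sum_(j < m) L t j * f j); last by rewrite relL mulr0.
by rewrite mulr_sumr; apply: eq_bigr => j _; rewrite mulrA.
Qed.

(* The correction turning a witness for one side of the colon/relation
   correspondence into a witness for the other: replace r by e_i g - r. *)
Lemma sum_shift_component (i : 'I_m) (g : {mpoly K[n]})
    (r : 'I_m -> {mpoly K[n]}) :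
  \sum_(j < m) ((j == i)%:R * g - r j) * f j
    = g * f i - \sum_(j < m) r j * f j.
Proof.
under eq_bigr do rewrite mulrBl.
rewrite sumrB (bigD1 i) //= eqxx mul1r big1 ?addr0 // => j /negbTE ->.
by rewrite mul0r mul0r.
Qed.

Lemma colon_relationP (i : 'I_m) (g : {mpoly K[n]}) :
  in_colon f i g <-> exists r, is_relation f r /\ r i = g.
Proof.
split.
- case=> r [ri0 gfi]; exists (fun j => (j == i)%:R * g - r j); split.
    by rewrite /is_relation sum_shift_component -gfi subrr.
  by rewrite eqxx mul1r ri0 subr0.
- case=> r [relr rig]; exists (fun j => (j == i)%:R * g - r j); split.
    by rewrite eqxx mul1r rig subrr.
  by rewrite sum_shift_component relr subr0.
Qed.

Lemma relation_component_ideal (k : nat) (L : 'I_k -> 'I_m -> {mpoly K[n]})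
    (i : 'I_m) (g : {mpoly K[n]}) :
  (forall t, is_relation f (L t)) ->
  (forall r, is_relation f r ->
     exists c : 'I_k -> {mpoly K[n]}, forall j, r j = \sum_(t < k) c t * L t j) ->
  (exists r, is_relation f r /\ r i = g) <-> in_ideal (fun t => L t i) g.
Proof.
move=> relL genL; split.
- case=> r [relr <-]; have [c rE] := genL r relr.
  by exists c; exact: rE.
- case=> c ->; exists (fun j => \sum_(t < k) c t * L t j).
  by split; first exact: relation_lincomb.
Qed.

End ColonIdeal.

Theorem lemma1p1 (K : fieldType) (n m : nat) (f : 'I_m -> {mpoly K[n]})
  (d : nat) (Hdeg : forall i, homog_deg d (f i))
  (Hmin : minimal_gens f)
  (Hlin : has_linear_relations f) :
  forall i : 'I_m, gen_by_linear_forms (in_colon f i).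
Proof.
move=> i; have [k [L [relL [linL genL]]]] := Hlin.
exists k, (fun t => L t i); split; first by move=> t; exact: linL.
move=> g; rewrite colon_relationP.
exact: relation_component_ideal.
Qed.
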